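(* Let $\mathcal V$ be braided monoidal closed and complete, and let $H$ be a Hopf $\mathcal V$-category with object set $X$ whose antipode is invertible. Then for every $x\in X$ there is an isomorphism $\int^r_{H,x}\cong\int^\ell_{H,x}$ in $\mathcal V$.
   Context: $\mathcal V$: braided monoidal closed category with all limits, tensor $\otimes$, unit $I$, braiding $\sigma$. A $\mathcal V$-category $A$ with object set $X$: objects $A_{x,y}$, compositions $m_{xyz}\colon A_{x,y}\otimes A_{y,z}\to A_{x,z}$, units $j_x\colon I\to A_{x,x}$, associative and unital. Semi-Hopf: each $A_{x,y}$ is a comonoid $(\delta_{xy},\epsilon_{xy})$ in $\mathcal V$ with all $m_{xyz},j_x$ comonoid morphisms. Hopf: antipode $s_{xy}\colon A_{x,y}\to A_{y,x}$ with $m_{xyx}\circ(1\otimes s_{xy})\circ\delta_{xy}=j_x\circ\epsilon_{xy}$, $m_{yxy}\circ(s_{xy}\otimes1)\circ\delta_{xy}=j_y\circ\epsilon_{xy}$; invertible if each $s_{xy}$ is an isomorphism. Left integral space: for $z\in X$, $\int^\ell_{A,z}$ is the object of $\mathcal V$ equipped with morphisms $\tau_{yz}\colon\int^\ell_{A,z}\to A_{y,z}$ ($y\in X$) satisfying $m_{xyz}\circ(1_{A_{x,y}}\otimes\tau_{yz})=\epsilon_{xy}\otimes\tau_{xz}$ for all $x,y$, universal among such: for any object $W$ with morphisms $w_y\colon W\to A_{y,z}$ satisfying $m_{xyz}\circ(1\otimes w_y)=\epsilon_{xy}\otimes w_x$ for all $x,y$ there is a unique $u\colon W\to\int^\ell_{A,z}$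 with $\tau_{yz}\circ u=w_y$ for all $y$ (it is the limit of the diagram of adjuncts of these maps under tensor-hom adjunction). Right integral space: for $x\in X$, $\int^r_{A,x}$ with morphisms $\tau_{xy}\colon\int^r_{A,x}\to A_{x,y}$ satisfying $m_{xzy}\circ(\tau_{xz}\otimes1_{A_{z,y}})=\tau_{xy}\otimes\epsilon_{zy}$ for all $z,y$, universal among such families. *)

Record Cat := {
  Ob :> Type;
  Hom : Ob -> Ob -> Type;
  idm : forall a, Hom a a;
  comp : forall a b c, Hom b c -> Hom a b -> Hom a c;
  comp_id_l : forall a b (f : Hom a b), comp a b b (idm b) f = f;
  comp_id_r : forall a b (f : Hom a b), comp a a b f (idm a) = f;
  comp_assoc : forall a b c d (h : Hom c d) (g : Hom b c) (f : Hom a b),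
      comp a c d h (comp a b c g f) = comp a b d (comp b c d h g) f
}.
Arguments Hom {C} a b : rename.
Arguments idm {C} a : rename.
Arguments comp {C a b c} g f : rename.

Declare Scope cat_scope.
Notation "g ∘ f" := (comp g f) (at level 40, left associativity) : cat_scope.
Open Scope cat_scope.

Record Monoidal (C : Cat) := {
  ten : C -> C -> C;
  tenf : forall a b c d, Hom a b -> Hom c d -> Hom (ten a c) (ten b d);
  tenf_id : forall a b, tenf _ _ _ _ (idm a) (idm b) = idm (ten a b);
  tenf_comp : forall a b c a' b' c' (f : Hom a b) (g : Hom b c)
      (f' : Hom a' b') (g' : Hom b' c'),
      tenf _ _ _ _ (g ∘ f) (g' ∘ f') = tenf _ _ _ _ g g' ∘ tenf _ _ _ _ f f';
  unit : C;
  assoc : forall a b c, Hom (ten (ten a b) c) (ten a (ten b c));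
  assoc_inv : forall a b c, Hom (ten a (ten b c)) (ten (ten a b) c);
  assoc_iso1 : forall a b c, assoc_inv a b c ∘ assoc a b c = idm _;
  assoc_iso2 : forall a b c, assoc a b c ∘ assoc_inv a b c = idm _;
  assoc_nat : forall a b c a' b' c' (f : Hom a a') (g : Hom b b') (h : Hom c c'),
      assoc a' b' c' ∘ tenf _ _ _ _ (tenf _ _ _ _ f g) h = tenf _ _ _ _ f (tenf _ _ _ _ g h) ∘ assoc a b c;
  lunit : forall a, Hom (ten unit a) a;
  lunit_inv : forall a, Hom a (ten unit a);
  lunit_iso1 : forall a, lunit_inv a ∘ lunit a = idm _;
  lunit_iso2 : forall a, lunit a ∘ lunit_inv a = idm _;
  lunit_nat : forall a b (f : Hom a b), f ∘ lunit a = lunit b ∘ tenf _ _ _ _ (idm unit) f;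
  runit : forall a, Hom (ten a unit) a;
  runit_inv : forall a, Hom a (ten a unit);
  runit_iso1 : forall a, runit_inv a ∘ runit a = idm _;
  runit_iso2 : forall a, runit a ∘ runit_inv a = idm _;
  runit_nat : forall a b (f : Hom a b), f ∘ runit a = runit b ∘ tenf _ _ _ _ f (idm unit);
  pentagon : forall a b c d,
      assoc a b (ten c d) ∘ assoc (ten a b) c d
      = tenf _ _ _ _ (idm a) (assoc b c d) ∘ assoc a (ten b c) d ∘ tenf _ _ _ _ (assoc a b c) (idm d);
  triangle : forall a b,
      tenf _ _ _ _ (idm a) (lunit b) ∘ assoc a unit b = tenf _ _ _ _ (runit a) (idm b)
}.
Arguments ten {C} M a b : rename.
Arguments tenf {C} M {a b c d} f g : rename.
Arguments unit {C} M : rename.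
Arguments assoc {C} M a b c : rename.
Arguments assoc_inv {C} M a b c : rename.
Arguments lunit {C} M a : rename.
Arguments lunit_inv {C} M a : rename.
Arguments runit {C} M a : rename.
Arguments runit_inv {C} M a : rename.

Record Braiding (C : Cat) (M : Monoidal C) := {
  braid : forall a b, Hom (ten M a b) (ten M b a);
  braid_inv : forall a b, Hom (ten M b a) (ten M a b);
  braid_iso1 : forall a b, braid_inv a b ∘ braid a b = idm _;
  braid_iso2 : forall a b, braid a b ∘ braid_inv a b = idm _;
  braid_nat : forall a b a' b' (f : Hom a a') (g : Hom b b'),
      tenf M g f ∘ braid a b = braid a' b' ∘ tenf M f g;
  hexagon1 : forall a b c,
      assoc M b c a ∘ braid a (ten M b c) ∘ assoc M a b c
      = tenf M (idm b) (braid a c) ∘ assoc M b a c ∘ tenf M (braid a b) (idm c);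
  hexagon2 : forall a b c,
      assoc_inv M c a b ∘ braid (ten M a b) c ∘ assoc_inv M a b c
      = tenf M (braid a c) (idm b) ∘ assoc_inv M a c b ∘ tenf M (idm a) (braid b c)
}.
Arguments braid {C M} B a b : rename.

Record Closed (C : Cat) (M : Monoidal C) := {
  ihom : C -> C -> C;
  ev : forall b c, Hom (ten M (ihom b c) b) c;
  curry : forall a b c, Hom (ten M a b) c -> Hom a (ihom b c);
  curry_ev : forall a b c (f : Hom (ten M a b) c),
      ev b c ∘ tenf M (curry a b c f) (idm b) = f;
  curry_uniq : forall a b c (f : Hom (ten M a b) c) (g : Hom a (ihom b c)),
      ev b c ∘ tenf M g (idm b) = f -> g = curry a b c f
}.

Section Comonoids.
Context {C : Cat} (M : Monoidal C) (B : Braiding C M).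

Definition is_comonoid (a : C) (d : Hom a (ten M a a)) (e : Hom a (unit M)) : Prop :=
  assoc M a a a ∘ tenf M d (idm a) ∘ d = tenf M (idm a) d ∘ d /\
  lunit M a ∘ tenf M e (idm a) ∘ d = idm a /\
  runit M a ∘ tenf M (idm a) e ∘ d = idm a.

Definition interchange (a a' b b' : C) :
    Hom (ten M (ten M a a') (ten M b b')) (ten M (ten M a b) (ten M a' b')) :=
  assoc_inv M a b (ten M a' b')
  ∘ tenf M (idm a) (assoc M b a' b')
  ∘ tenf M (idm a) (tenf M (braid B a' b) (idm b'))
  ∘ tenf M (idm a) (assoc_inv M a' b b')
  ∘ assoc M a a' (ten M b b').

Definition ten_comult (a b : C) (da : Hom a (ten M a a)) (db : Hom b (ten M b b)) :
    Hom (ten M a b) (ten M (ten M a b) (ten M a b)) :=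
  interchange a a b b ∘ tenf M da db.

Definition ten_counit (a b : C) (ea : Hom a (unit M)) (eb : Hom b (unit M)) :
    Hom (ten M a b) (unit M) :=
  lunit M (unit M) ∘ tenf M ea eb.

Definition is_comonoid_morphism (a b : C) (da : Hom a (ten M a a)) (ea : Hom a (unit M))
    (db : Hom b (ten M b b)) (eb : Hom b (unit M)) (f : Hom a b) : Prop :=
  db ∘ f = tenf M f f ∘ da /\ eb ∘ f = ea.

Definition unit_comult : Hom (unit M) (ten M (unit M) (unit M)) := lunit_inv M (unit M).
Definition unit_counit : Hom (unit M) (unit M) := idm (unit M).

End Comonoids.
Arguments ten_comult {C} M B {a b} da db.
Arguments ten_counit {C} M {a b} ea eb.
Arguments is_comonoid_morphism {C} M {a b} da ea db eb f.

Record VCat {C : Cat} (M : Monoidal C) (X : Type) := {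
  hom : X -> X -> C;
  mult : forall x y z, Hom (ten M (hom x y) (hom y z)) (hom x z);
  unt : forall x, Hom (unit M) (hom x x);
  mult_assoc : forall x y z w,
      mult x z w ∘ tenf M (mult x y z) (idm (hom z w))
      = mult x y w ∘ tenf M (idm (hom x y)) (mult y z w) ∘ assoc M _ _ _;
  unt_l : forall x y, mult x x y ∘ tenf M (unt x) (idm (hom x y)) = lunit M (hom x y);
  unt_r : forall x y, mult x y y ∘ tenf M (idm (hom x y)) (unt y) = runit M (hom x y)
}.
Arguments hom {C M X} A x y : rename.
Arguments mult {C M X} A x y z : rename.
Arguments unt {C M X} A x : rename.

Record SemiHopf {C : Cat} (M : Monoidal C) (B : Braiding C M) (X : Type) := {
  sh_cat :> VCat M X;
  comult : forall x y, Hom (hom sh_cat x y) (ten M (hom sh_cat x y) (hom sh_cat x y));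
  counit : forall x y, Hom (hom sh_cat x y) (unit M);
  comonoid_ax : forall x y, is_comonoid M (hom sh_cat x y) (comult x y) (counit x y);
  mult_comonoid_morphism : forall x y z,
      is_comonoid_morphism M
        (ten_comult M B (comult x y) (comult y z))
        (ten_counit M (counit x y) (counit y z))
        (comult x z) (counit x z) (mult sh_cat x y z);
  unt_comonoid_morphism : forall x,
      is_comonoid_morphism M (unit_comult M) (unit_counit M)
        (comult x x) (counit x x) (unt sh_cat x)
}.
Arguments comult {C M B X} H x y : rename.
Arguments counit {C M B X} H x y : rename.

Record Hopf {C : Cat} (M : Monoidal C) (B : Braiding C M) (X : Type) := {
  hopf_sh :> SemiHopf M B X;
  antipode : forall x y, Hom (hom hopf_sh x y) (hom hopf_sh y x);
  antipode_l : forall x y,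
      mult hopf_sh x y x ∘ tenf M (idm _) (antipode x y) ∘ comult hopf_sh x y
      = unt hopf_sh x ∘ counit hopf_sh x y;
  antipode_r : forall x y,
      mult hopf_sh y x y ∘ tenf M (antipode x y) (idm _) ∘ comult hopf_sh x y
      = unt hopf_sh y ∘ counit hopf_sh x y
}.
Arguments antipode {C M B X} H x y : rename.

Definition is_iso {C : Cat} {a b : C} (f : Hom a b) : Prop :=
  exists g : Hom b a, g ∘ f = idm a /\ f ∘ g = idm b.

Definition invertible_antipode {C : Cat} {M : Monoidal C} {B : Braiding C M} {X : Type}
    (H : Hopf M B X) : Prop :=
  forall x y, is_iso (antipode H x y).

Section Integrals.
Context {C : Cat} {M : Monoidal C} {B : Braiding C M} {X : Type} (H : SemiHopf M B X).

Definition left_integral_cone (z : X) (W : C) (w : forall y, Hom W (hom H y z)) : Prop :=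
  forall x y,
    mult H x y z ∘ tenf M (idm (hom H x y)) (w y)
    = lunit M (hom H x z) ∘ tenf M (counit H x y) (w x).

Definition is_left_integral_space (z : X) (L : C) (tau : forall y, Hom L (hom H y z)) : Prop :=
  left_integral_cone z L tau /\
  forall (W : C) (w : forall y, Hom W (hom H y z)), left_integral_cone z W w ->
    exists u : Hom W L, (forall y, tau y ∘ u = w y) /\
      forall u' : Hom W L, (forall y, tau y ∘ u' = w y) -> u' = u.

Definition right_integral_cone (x : X) (W : C) (w : forall y, Hom W (hom H x y)) : Prop :=
  forall z y,
    mult H x z y ∘ tenf M (w z) (idm (hom H z y))
    = runit M (hom H x y) ∘ tenf M (w y) (counit H z y).

Definition is_right_integral_space (x : X) (R : C) (tau : forall y, Hom R (hom H x y)) : Prop :=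
  right_integral_cone x R tau /\
  forall (W : C) (w : forall y, Hom W (hom H x y)), right_integral_cone x W w ->
    exists u : Hom W R, (forall y, tau y ∘ u = w y) /\
      forall u' : Hom W R, (forall y, tau y ∘ u' = w y) -> u' = u.

End Integrals.

Definition isomorphic {C : Cat} (a b : C) : Prop :=
  exists (f : Hom a b) (g : Hom b a), g ∘ f = idm a /\ f ∘ g = idm b.

(* The antipode S of a Hopf V-category is anti-multiplicative,
     S_{xz} ∘ m_{xyz} = m_{zyx} ∘ (S_{yz} ⊗ S_{xy}) ∘ σ,
   and preserves the counit, ε_{yx} ∘ S_{xy} = ε_{xy}.  With these two facts,
   post-composing a right integral cone (τ_y : W → H_{x,y})_y with the
   antipode gives a left integral cone (S_{xy} ∘ τ_y : W → H_{y,x})_y, and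
   post-composing a left cone with the inverse antipode gives a right cone.
   The universal properties of the two integral spaces then produce maps
   R → L and L → R which are mutually inverse, since an endomorphism of a
   universal cone commuting with the cone maps is the identity.

   Anti-multiplicativity is the classical convolution argument: S ∘ m and
   m ∘ (S ⊗ S) ∘ σ are a left and a right convolution inverse of m, taken
   with respect to the tensor-product comonoid H_{x,y} ⊗ H_{y,z}. *)

From Stdlib Require Import IndefiniteDescription.

Section CategoryBasics.
Context {V : Cat} {M : Monoidal V}.
Local Notation "f ⊗ g" := (tenf M f g) (at level 35).
Local Notation "1" := (idm _) : cat_scope.

Lemma compA {a b c d : V} (h : Hom c d) (g : Hom b c) (f : Hom a b) :
  h ∘ (g ∘ f) = h ∘ g ∘ f.
Proof. apply comp_assoc. Qed.
Lemma comp1l {a b : V} (f : Hom a b) : idm b ∘ f = f.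
Proof. apply comp_id_l. Qed.
Lemma comp1r {a b : V} (f : Hom a b) : f ∘ idm a = f.
Proof. apply comp_id_r. Qed.

Lemma chain_rw2 {a b c d : V} (X : Hom c d) (g : Hom b c) (f : Hom a b) (k : Hom a c) :
  g ∘ f = k -> X ∘ g ∘ f = X ∘ k.
Proof. intros E; rewrite <- comp_assoc, E; reflexivity. Qed.
Lemma chain_rw3 {a b c d e : V} (X : Hom d e) (h : Hom c d) (g : Hom b c) (f : Hom a b)
  (k : Hom a d) : h ∘ g ∘ f = k -> X ∘ h ∘ g ∘ f = X ∘ k.
Proof. intros E; rewrite <- !comp_assoc, <- E, !comp_assoc; reflexivity. Qed.
Lemma chain_rw4 {a b c d e z : V} (X : Hom e z) (i : Hom d e) (h : Hom c d) (g : Hom b c)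
  (f : Hom a b) (k : Hom a e) : i ∘ h ∘ g ∘ f = k -> X ∘ i ∘ h ∘ g ∘ f = X ∘ k.
Proof. intros E; rewrite <- !comp_assoc, <- E, !comp_assoc; reflexivity. Qed.
Lemma chain_rw5 {a b c d e z w : V} (X : Hom z w) (j : Hom e z) (i : Hom d e) (h : Hom c d)
  (g : Hom b c) (f : Hom a b) (k : Hom a z) :
  j ∘ i ∘ h ∘ g ∘ f = k -> X ∘ j ∘ i ∘ h ∘ g ∘ f = X ∘ k.
Proof. intros E; rewrite <- !comp_assoc, <- E, !comp_assoc; reflexivity. Qed.

Lemma tensor_id a b : (idm a) ⊗ (idm b) = idm (ten M a b).
Proof. apply tenf_id. Qed.
Lemma tensor_comp {a b c a' b' c' : V} (f : Hom a b) (g : Hom b c) (f' : Hom a' b')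
  (g' : Hom b' c') : (g ∘ f) ⊗ (g' ∘ f') = (g ⊗ g') ∘ (f ⊗ f').
Proof. apply tenf_comp. Qed.

Lemma tensor_lr {a b c d : V} (f : Hom a b) (g : Hom c d) : (f ⊗ 1) ∘ (1 ⊗ g) = f ⊗ g.
Proof. rewrite <- tensor_comp, comp1l, comp1r; reflexivity. Qed.
Lemma tensor_rl {a b c d : V} (f : Hom a b) (g : Hom c d) : (1 ⊗ g) ∘ (f ⊗ 1) = f ⊗ g.
Proof. rewrite <- tensor_comp, comp1l, comp1r; reflexivity. Qed.
Lemma tensor_l_comp {a b c e : V} (f : Hom a b) (g : Hom b c) :
  (g ⊗ idm e) ∘ (f ⊗ 1) = (g ∘ f) ⊗ 1.
Proof. rewrite <- tensor_comp, comp1l; reflexivity. Qed.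
Lemma tensor_r_comp {a b c e : V} (f : Hom a b) (g : Hom b c) :
  (idm e ⊗ g) ∘ (1 ⊗ f) = 1 ⊗ (g ∘ f).
Proof. rewrite <- tensor_comp, comp1l; reflexivity. Qed.

Lemma tensor_split_l {a b c d e : V} (f : Hom a b) (g : Hom b c) (h : Hom d e) :
  (g ∘ f) ⊗ h = (g ⊗ h) ∘ (f ⊗ 1).
Proof. rewrite <- tensor_comp, comp1r; reflexivity. Qed.
Lemma tensor_split_l' {a b c d e : V} (f : Hom a b) (g : Hom b c) (h : Hom d e) :
  (g ∘ f) ⊗ h = (g ⊗ 1) ∘ (f ⊗ h).
Proof. rewrite <- tensor_comp, comp1l; reflexivity. Qed.
Lemma tensor_split_r {a b c d e : V} (f : Hom a b) (g : Hom b c) (h : Hom d e) :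
  h ⊗ (g ∘ f) = (h ⊗ g) ∘ (1 ⊗ f).
Proof. rewrite <- tensor_comp, comp1r; reflexivity. Qed.
Lemma tensor_split_r' {a b c d e : V} (f : Hom a b) (g : Hom b c) (h : Hom d e) :
  h ⊗ (g ∘ f) = (1 ⊗ g) ∘ (h ⊗ f).
Proof. rewrite <- tensor_comp, comp1l; reflexivity. Qed.

End CategoryBasics.

(* [norm] puts composites in left-associated form and removes identities;
   [rw E] rewrites with E (possibly partially applied), also when the left
   side of E is the tail of a longer composite; [rwb E] rewrites right to left. *)
Ltac norm := repeat rewrite ?comp_assoc, ?comp_id_l, ?comp_id_r.
Ltac rw_chain E := first [ rewrite (chain_rw2 _ _ _ _ E) | rewrite (chain_rw3 _ _ _ _ _ E)
  | rewrite (chain_rw4 _ _ _ _ _ _ E) | rewrite (chain_rw5 _ _ _ _ _ _ _ E) ].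
Ltac rw_app E := first [ rw_chain uconstr:(E _ _ _ _ _ _ _) | rw_chain uconstr:(E _ _ _ _ _ _)
  | rw_chain uconstr:(E _ _ _ _ _) | rw_chain uconstr:(E _ _ _ _) | rw_chain uconstr:(E _ _ _)
  | rw_chain uconstr:(E _ _) | rw_chain uconstr:(E _) | rw_chain E ].
Ltac rw_ E := first [ rewrite E | rw_app E ]; norm.
Tactic Notation "rw" uconstr(E) := rw_ E.
Ltac rwb_ E := first [ rewrite <- E
  | rw_chain uconstr:(eq_sym (E _ _ _ _ _ _ _)) | rw_chain uconstr:(eq_sym (E _ _ _ _ _ _))
  | rw_chain uconstr:(eq_sym (E _ _ _ _ _)) | rw_chain uconstr:(eq_sym (E _ _ _ _))
  | rw_chain uconstr:(eq_sym (E _ _ _)) | rw_chain uconstr:(eq_sym (E _ _))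
  | rw_chain uconstr:(eq_sym (E _)) | rw_chain uconstr:(eq_sym E) ]; norm.
Tactic Notation "rwb" uconstr(E) := rwb_ E.
Ltac normH E := repeat rewrite ?comp_assoc, ?comp_id_l, ?comp_id_r in E.

Section MonoidalCoherence.
Context {V : Cat} {M : Monoidal V}.
Local Notation "f ⊗ g" := (tenf M f g) (at level 35).
Local Notation "1" := (idm _) : cat_scope.
Local Notation I := (unit M).
Local Notation α := (assoc M).
Local Notation α' := (assoc_inv M).
Local Notation λ := (lunit M).
Local Notation λ' := (lunit_inv M).
Local Notation ρ := (runit M).
Local Notation ρ' := (runit_inv M).

Lemma assoc_natural {a b c a' b' c' : V} (f : Hom a a') (g : Hom b b') (h : Hom c c') :
  α a' b' c' ∘ ((f ⊗ g) ⊗ h) = (f ⊗ (g ⊗ h)) ∘ α a b c.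
Proof. apply assoc_nat. Qed.
Lemma lunit_natural {a b : V} (f : Hom a b) : f ∘ λ a = λ b ∘ (1 ⊗ f).
Proof. apply lunit_nat. Qed.
Lemma runit_natural {a b : V} (f : Hom a b) : f ∘ ρ a = ρ b ∘ (f ⊗ 1).
Proof. apply runit_nat. Qed.
Lemma assoc_inv_l a b c : α' a b c ∘ α a b c = 1. Proof. apply assoc_iso1. Qed.
Lemma assoc_inv_r a b c : α a b c ∘ α' a b c = 1. Proof. apply assoc_iso2. Qed.

Lemma inverse_natural {a b c d : V} (i : Hom a b) (i' : Hom b a) (j : Hom c d)
  (j' : Hom d c) (F : Hom a c) (G : Hom b d) :
  i' ∘ i = 1 -> i ∘ i' = 1 -> j' ∘ j = 1 -> j ∘ j' = 1 ->
  j ∘ F = G ∘ i -> j' ∘ G = F ∘ i'.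
Proof.
  intros h1 h2 h3 h4 E.
  rewrite <- (comp1r (j' ∘ G)), <- h2, compA, <- (compA j' G i), <- E, compA, h3, comp1l.
  reflexivity.
Qed.

Lemma iso_cancel_l {a b c : V} (i : Hom b c) (i' : Hom c b) (f g : Hom a b) :
  i' ∘ i = 1 -> i ∘ f = i ∘ g -> f = g.
Proof.
  intros h E. rewrite <- (comp1l f), <- (comp1l g), <- h, <- !compA, E; reflexivity.
Qed.
Lemma iso_cancel_r {a b c : V} (i : Hom a b) (i' : Hom b a) (f g : Hom b c) :
  i ∘ i' = 1 -> f ∘ i = g ∘ i -> f = g.
Proof.
  intros h E. rewrite <- (comp1r f), <- (comp1r g), <- h, !compA, E; reflexivity.
Qed.

Lemma assoc_inv_natural {a b c a' b' c' : V} (f : Hom a a') (g : Hom b b') (h : Hom c c') :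
  α' a' b' c' ∘ (f ⊗ (g ⊗ h)) = ((f ⊗ g) ⊗ h) ∘ α' a b c.
Proof.
  apply (inverse_natural (α a b c) _ (α a' b' c'));
    try apply assoc_iso1; try apply assoc_iso2.
  apply assoc_nat.
Qed.

Lemma tensor_unit_l_inj {a b : V} (f g : Hom a b) : idm I ⊗ f = idm I ⊗ g -> f = g.
Proof.
  intros E. apply (iso_cancel_r (λ a) (λ' a)); [apply lunit_iso2|].
  rewrite !lunit_nat, E; reflexivity.
Qed.
Lemma tensor_unit_r_inj {a b : V} (f g : Hom a b) : f ⊗ idm I = g ⊗ idm I -> f = g.
Proof.
  intros E. apply (iso_cancel_r (ρ a) (ρ' a)); [apply runit_iso2|].
  rewrite !runit_nat, E; reflexivity.
Qed.

Lemma tensor_inverse {a b c d : V} (f : Hom a b) (f' : Hom b a) (g : Hom c d) (g' : Hom d c) :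
  f' ∘ f = 1 -> g' ∘ g = 1 -> (f' ⊗ g') ∘ (f ⊗ g) = 1.
Proof. intros h1 h2; rewrite <- tensor_comp, h1, h2, tensor_id; reflexivity. Qed.
Lemma comp_inverse {a b c : V} (f : Hom a b) (f' : Hom b a) (g : Hom b c) (g' : Hom c b) :
  f ∘ f' = 1 -> g ∘ g' = 1 -> (g ∘ f) ∘ (f' ∘ g') = 1.
Proof. intros h1 h2. rewrite <- compA, (compA f f' g'), h1, comp1l, h2; reflexivity. Qed.

Lemma triangle_id (a b : V) : (1 ⊗ λ b) ∘ α a I b = ρ a ⊗ 1.
Proof. apply triangle. Qed.
Lemma triangle_inv (a b : V) : (ρ a ⊗ 1) ∘ α' a I b = 1 ⊗ λ b.
Proof. rewrite <- triangle_id, <- compA, assoc_inv_r, comp1r; reflexivity. Qed.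
Lemma pentagon_id (a b c d : V) :
  α a b (ten M c d) ∘ α (ten M a b) c d
  = (1 ⊗ α b c d) ∘ α a (ten M b c) d ∘ (α a b c ⊗ 1).
Proof. apply pentagon. Qed.

(* The classical consequences of the pentagon and triangle axioms (Kelly):
   compatibility of the unitors with the tensor product, and λ_I = ρ_I. *)
Lemma lunit_tensor (a b : V) : λ (ten M a b) ∘ α I a b = λ a ⊗ idm b.
Proof.
  apply tensor_unit_l_inj.
  apply (iso_cancel_r (α I (ten M I a) b ∘ (α I I a ⊗ 1))
                      ((α' I I a ⊗ 1) ∘ α' I (ten M I a) b)).
  { apply comp_inverse; [apply tensor_inverse; [apply assoc_iso2 | apply comp1l]
                        | apply assoc_iso2]. }
  rewrite <- tensor_r_comp. norm.
  rw (eq_sym (pentagon_id I I a b)). rw triangle_id.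
  rw (eq_sym (assoc_natural (idm I) (λ a) (idm b))).
  rw tensor_l_comp. rw triangle_id. rw assoc_natural. rewrite tensor_id. reflexivity.
Qed.

Lemma runit_tensor (a b : V) : ρ (ten M a b) = (1 ⊗ ρ b) ∘ α a b I.
Proof.
  apply tensor_unit_r_inj. apply (iso_cancel_l (α a b I) (α' a b I)); [apply assoc_inv_l|].
  rewrite <- triangle_id, <- (tensor_id a b).
  norm. rw assoc_natural. rw pentagon_id. rw tensor_r_comp. rw triangle_id.
  rwb assoc_natural. rw tensor_l_comp. reflexivity.
Qed.
Lemma runit_tensor' (a b : V) : ρ (ten M a b) ∘ α' a b I = 1 ⊗ ρ b.
Proof. rewrite runit_tensor, <- compA, assoc_inv_r, comp1r; reflexivity. Qed.

Lemma lunit_unit_runit : λ I = ρ I.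
Proof.
  symmetry. apply tensor_unit_r_inj. apply (iso_cancel_l (λ I) (λ' I)); [apply lunit_iso1|].
  rewrite <- triangle_id. norm. rwb lunit_natural. rw lunit_tensor. reflexivity.
Qed.

End MonoidalCoherence.

Section BraidedCoherence.
Context {V : Cat} {M : Monoidal V} {B : Braiding V M}.
Local Notation "f ⊗ g" := (tenf M f g) (at level 35).
Local Notation "1" := (idm _) : cat_scope.
Local Notation I := (unit M).
Local Notation α := (assoc M).
Local Notation α' := (assoc_inv M).
Local Notation λ := (lunit M).
Local Notation ρ := (runit M).
Local Notation σ := (braid B).
Local Notation σ' := (braid_inv _ _ B).

Lemma braid_natural {a b a' b' : V} (f : Hom a a') (g : Hom b b') :
  (g ⊗ f) ∘ σ a b = σ a' b' ∘ (f ⊗ g).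
Proof. apply braid_nat. Qed.
Lemma braid_inv_l a b : σ' a b ∘ σ a b = 1. Proof. apply braid_iso1. Qed.
Lemma braid_inv_r a b : σ a b ∘ σ' a b = 1. Proof. apply braid_iso2. Qed.
Lemma braid_inv_natural {a b a' b' : V} (f : Hom a a') (g : Hom b b') :
  (f ⊗ g) ∘ σ' a b = σ' a' b' ∘ (g ⊗ f).
Proof.
  symmetry. apply (inverse_natural (σ a b) _ (σ a' b'));
    try apply braid_inv_l; try apply braid_inv_r.
  symmetry; apply braid_natural.
Qed.
Lemma hexagon_1 a b c :
  α b c a ∘ σ a (ten M b c) ∘ α a b c = (1 ⊗ σ a c) ∘ α b a c ∘ (σ a b ⊗ 1).
Proof. apply hexagon1. Qed.
Lemma hexagon_2 a b c :
  α' c a b ∘ σ (ten M a b) c ∘ α' a b c = (σ a c ⊗ 1) ∘ α' a c b ∘ (1 ⊗ σ b c).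
Proof. apply hexagon2. Qed.

Lemma lunit_braid (a : V) : λ a ∘ σ a I = ρ a.
Proof.
  symmetry. apply (@tensor_unit_r_inj _ M).
  apply (iso_cancel_l (σ a I) (σ' a I)); [apply braid_inv_l|].
  rewrite <- triangle_id. norm. rwb braid_natural. rewrite <- lunit_tensor. norm.
  rw hexagon_1. rwb lunit_natural. rw lunit_tensor. rw tensor_l_comp. reflexivity.
Qed.
Lemma runit_braid (a : V) : ρ a ∘ σ I a = λ a.
Proof.
  symmetry. apply (@tensor_unit_l_inj _ M).
  apply (iso_cancel_l (σ I a) (σ' I a)); [apply braid_inv_l|].
  rewrite <- triangle_inv. norm. rwb braid_natural. rewrite <- runit_tensor'. norm.
  rw hexagon_2. rwb runit_natural. rw runit_tensor'. rw tensor_r_comp. reflexivity.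
Qed.
Lemma runit_braid_inv (a : V) : ρ a ∘ σ' a I = λ a.
Proof. rewrite <- lunit_braid. norm. rw braid_inv_r. reflexivity. Qed.

End BraidedCoherence.

Section Interchange.
Context {V : Cat} {M : Monoidal V} {B : Braiding V M}.
Local Notation "f ⊗ g" := (tenf M f g) (at level 35).
Local Notation "x ⊗⊗ y" := (ten M x y) (at level 34, right associativity).
Local Notation "1" := (idm _) : cat_scope.
Local Notation I := (unit M).
Local Notation α := (assoc M).
Local Notation α' := (assoc_inv M).
Local Notation λ := (lunit M).
Local Notation ρ := (runit M).
Local Notation σ := (braid B).
Local Notation IC := (interchange M B).

Definition swap12 a b c : Hom (a ⊗⊗ (b ⊗⊗ c)) (b ⊗⊗ (a ⊗⊗ c)) :=
  α b a c ∘ (σ a b ⊗ 1) ∘ α' a b c.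

Lemma interchange_swap12 a a' b b' :
  IC a a' b b' = α' a b (a' ⊗⊗ b') ∘ (1 ⊗ swap12 a' b b') ∘ α a a' (b ⊗⊗ b').
Proof. unfold interchange, swap12. norm. rw tensor_r_comp. rw tensor_r_comp. reflexivity. Qed.

Lemma swap12_natural {a b c a2 b2 c2 : V} (f : Hom a a2) (g : Hom b b2) (h : Hom c c2) :
  swap12 a2 b2 c2 ∘ (f ⊗ (g ⊗ h)) = (g ⊗ (f ⊗ h)) ∘ swap12 a b c.
Proof.
  unfold swap12. norm. rw assoc_inv_natural. rwb tensor_comp. rwb braid_natural.
  rw tensor_split_l. rw assoc_natural. reflexivity.
Qed.

Lemma pentagon_a a b c d :
  α a (b ⊗⊗ c) d ∘ (α a b c ⊗ 1) = (1 ⊗ α' b c d) ∘ α a b (c ⊗⊗ d) ∘ α (a ⊗⊗ b) c d.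
Proof. rw pentagon_id. rw tensor_r_comp. rewrite assoc_inv_l, tensor_id. norm. reflexivity. Qed.
Lemma pentagon_b a b c d :
  α (a ⊗⊗ b) c d ∘ (α' a b c ⊗ 1) = α' a b (c ⊗⊗ d) ∘ (1 ⊗ α b c d) ∘ α a (b ⊗⊗ c) d.
Proof.
  apply (iso_cancel_l (α a b (c ⊗⊗ d)) (α' a b (c ⊗⊗ d))); [apply assoc_inv_l|]. norm.
  rw pentagon_id. rw tensor_l_comp. rewrite assoc_inv_r, tensor_id. norm. rw assoc_inv_r.
  reflexivity.
Qed.
Lemma pentagon_c a b c d :
  α a (b ⊗⊗ c) d ∘ (α a b c ⊗ 1) ∘ α' (a ⊗⊗ b) c d = (1 ⊗ α' b c d) ∘ α a b (c ⊗⊗ d).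
Proof. rw pentagon_a. rw assoc_inv_r. reflexivity. Qed.
Lemma pentagon_d a b c d :
  α (a ⊗⊗ b) c d ∘ (α' a b c ⊗ 1) ∘ α' a (b ⊗⊗ c) d = α' a b (c ⊗⊗ d) ∘ (1 ⊗ α b c d).
Proof. rw pentagon_b. rw assoc_inv_r. reflexivity. Qed.
Lemma pentagon_e a b c d :
  α (a ⊗⊗ b) c d ∘ (α' a b c ⊗ 1) ∘ α' a (b ⊗⊗ c) d ∘ (1 ⊗ α' b c d) = α' a b (c ⊗⊗ d).
Proof. rw pentagon_d. rw tensor_r_comp. rewrite assoc_inv_r, tensor_id. norm. reflexivity. Qed.

Lemma swap12_assoc a b c d :
  α b (a ⊗⊗ c) d ∘ (swap12 a b c ⊗ 1) ∘ α' a (b ⊗⊗ c) d ∘ (1 ⊗ α' b c d)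
  = (1 ⊗ α' a c d) ∘ swap12 a b (c ⊗⊗ d).
Proof.
  unfold swap12. norm. rw tensor_split_l. rw tensor_split_l. rw pentagon_a.
  rw assoc_natural. rewrite tensor_id. rw pentagon_e. reflexivity.
Qed.

Lemma braid_tensor_r a b b' :
  σ a (b ⊗⊗ b') = α' b b' a ∘ (1 ⊗ σ a b') ∘ α b a b' ∘ (σ a b ⊗ 1) ∘ α' a b b'.
Proof. rwb hexagon_1. rw assoc_inv_l. rw assoc_inv_r. reflexivity. Qed.
Lemma braid_tensor_l a a' b :
  σ (a ⊗⊗ a') b = α b a a' ∘ (σ a b ⊗ 1) ∘ α' a b a' ∘ (1 ⊗ σ a' b) ∘ α a a' b.
Proof. rwb hexagon_2. rw assoc_inv_r. rw assoc_inv_l. reflexivity. Qed.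

Lemma swap12_tensor_mid a b b' c :
  swap12 a (b ⊗⊗ b') c
  = α' b b' (a ⊗⊗ c) ∘ (1 ⊗ swap12 a b' c) ∘ swap12 a b (b' ⊗⊗ c) ∘ (1 ⊗ α b b' c).
Proof.
  unfold swap12. rewrite braid_tensor_r. norm.
  rw tensor_split_l. rw tensor_split_l. rw tensor_split_l. rw tensor_split_l.
  rw pentagon_b. rw assoc_natural. rw pentagon_a. rw assoc_natural. rewrite tensor_id.
  rw pentagon_d. repeat rw tensor_split_r. reflexivity.
Qed.
Lemma swap12_tensor_first a a' b c :
  swap12 (a ⊗⊗ a') b c
  = (1 ⊗ α' a a' c) ∘ swap12 a b (a' ⊗⊗ c) ∘ (1 ⊗ swap12 a' b c) ∘ α a a' (b ⊗⊗ c).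
Proof.
  unfold swap12. rewrite braid_tensor_l. norm.
  rw tensor_split_l. rw tensor_split_l. rw tensor_split_l. rw tensor_split_l.
  rw pentagon_a. rw assoc_natural. rewrite tensor_id. rw pentagon_b. rw assoc_natural.
  rw pentagon_c. repeat rw tensor_split_r. reflexivity.
Qed.

Lemma interchange_assoc a a' a'' b b' b'' :
  α (a ⊗⊗ b) (a' ⊗⊗ b') (a'' ⊗⊗ b'') ∘ (IC a a' b b' ⊗ 1) ∘ IC (a ⊗⊗ a') a'' (b ⊗⊗ b') b''
  = (1 ⊗ IC a' a'' b' b'') ∘ IC a (a' ⊗⊗ a'') b (b' ⊗⊗ b'') ∘ (α a a' a'' ⊗ α b b' b'').
Proof.
  rewrite !interchange_swap12. norm.
  rw tensor_split_l. rw tensor_split_l. rw pentagon_b. rw assoc_natural. rw pentagon_c.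
  rewrite <- (tensor_id a a'). rw assoc_natural. rw pentagon_id.
  rewrite <- (tensor_id a b). rwb assoc_inv_natural.
  rewrite <- (tensor_rl (α a a' a'') (α b b' b'')). norm.
  rewrite <- (tensor_id a (a' ⊗⊗ a'')). rw assoc_natural.
  repeat rw tensor_r_comp. f_equal. f_equal. f_equal.
  rewrite swap12_tensor_mid, swap12_tensor_first. norm.
  rewrite <- (tensor_id a' a''). rw assoc_natural.
  f_equal. repeat rw tensor_split_r. f_equal. f_equal. f_equal.
  rw (tensor_r_comp (α' a' a'' (b' ⊗⊗ b'')) (α a' a'' (b' ⊗⊗ b''))).
  rewrite assoc_inv_r, tensor_id. norm.
  rwb swap12_natural. f_equal. rw swap12_assoc. reflexivity.
Qed.

Lemma interchange_natural {a a' b b' a2 a2' b2 b2' : V} (f : Hom a a2) (f' : Hom a' a2')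
  (g : Hom b b2) (g' : Hom b' b2') :
  IC a2 a2' b2 b2' ∘ ((f ⊗ f') ⊗ (g ⊗ g')) = ((f ⊗ g) ⊗ (f' ⊗ g')) ∘ IC a a' b b'.
Proof.
  rewrite !interchange_swap12. norm. rw assoc_natural. rwb tensor_comp.
  rw swap12_natural. rw tensor_split_r. rw assoc_inv_natural. reflexivity.
Qed.

Lemma interchange_runit a b :
  ρ (a ⊗⊗ b) ∘ (1 ⊗ λ I) ∘ IC a I b I = ρ a ⊗ ρ b.
Proof.
  rewrite interchange_swap12, lunit_unit_runit. norm. rewrite <- (tensor_id a b).
  rwb assoc_inv_natural. rw runit_tensor'. repeat rw tensor_r_comp.
  unfold swap12. norm. rwb runit_tensor. rwb runit_natural. rw runit_braid.
  rw runit_tensor'. rwb lunit_natural. rw tensor_split_r. rw triangle_id. rw tensor_rl.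
  reflexivity.
Qed.
Lemma interchange_lunit a b :
  λ (a ⊗⊗ b) ∘ (λ I ⊗ 1) ∘ IC I a I b = λ a ⊗ λ b.
Proof.
  rewrite interchange_swap12, lunit_unit_runit. norm. rw triangle_inv.
  rwb lunit_natural. rwb lunit_natural.
  unfold swap12. norm. rw lunit_tensor. rw tensor_l_comp. rw lunit_braid. rw triangle_inv.
  rw lunit_natural. rwb assoc_natural. rewrite tensor_id. rw lunit_tensor. rw tensor_lr.
  reflexivity.
Qed.

End Interchange.

Section TensorComonoid.
Context {V : Cat} {M : Monoidal V} (B : Braiding V M).
Local Notation "f ⊗ g" := (tenf M f g) (at level 35).
Local Notation "x ⊗⊗ y" := (ten M x y) (at level 34, right associativity).
Local Notation "1" := (idm _) : cat_scope.
Local Notation α := (assoc M).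
Local Notation α' := (assoc_inv M).

Lemma comonoid_coassoc' (a : V) (d : Hom a (a ⊗⊗ a)) (e : Hom a (unit M)) :
  is_comonoid M a d e -> (d ⊗ 1) ∘ d = α' a a a ∘ (1 ⊗ d) ∘ d.
Proof. intros [coas _]. rwb coas. rw assoc_inv_l. reflexivity. Qed.

Lemma tensor_comonoid (a b : V) (da : Hom a (a ⊗⊗ a)) (ea : Hom a (unit M))
  (db : Hom b (b ⊗⊗ b)) (eb : Hom b (unit M)) :
  is_comonoid M a da ea -> is_comonoid M b db eb ->
  is_comonoid M (a ⊗⊗ b) (ten_comult M B da db) (ten_counit M ea eb).
Proof.
  intros Ha Hb. pose proof Ha as [_ [cuLa cuRa]]. pose proof Hb as [_ [cuLb cuRb]].
  unfold ten_comult, ten_counit. split; [|split].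
  - norm. rewrite (tensor_split_l (da ⊗ db) (interchange M B _ _ _ _)).
    rewrite (tensor_split_r (da ⊗ db) (interchange M B _ _ _ _)).
    norm. rewrite <- (tensor_id a b). rwb interchange_natural. rwb interchange_natural.
    rewrite !tensor_id. rwb tensor_comp. rwb tensor_comp.
    rewrite (comonoid_coassoc' a da ea Ha), (comonoid_coassoc' b db eb Hb).
    rewrite (tensor_comp da (α' _ _ _ ∘ (1 ⊗ da))).
    rewrite (tensor_comp (1 ⊗ da) (α' _ _ _)).
    norm. rw interchange_assoc.
    rwb (tensor_comp (α' _ _ _) (α _ _ _) (α' _ _ _) (α _ _ _)).
    rewrite !assoc_inv_r, tensor_id. norm. rwb tensor_comp. reflexivity.
  - norm. rw tensor_split_l. rewrite <- (tensor_id a b). rwb interchange_natural.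
    rewrite tensor_id. rw interchange_lunit. rwb tensor_comp. rwb tensor_comp.
    rw cuLa. rw cuLb. apply tensor_id.
  - norm. rw tensor_split_r. rewrite <- (tensor_id a b). rwb interchange_natural.
    rewrite tensor_id. rw interchange_runit. rwb tensor_comp. rwb tensor_comp.
    rw cuRa. rw cuRb. apply tensor_id.
Qed.

End TensorComonoid.

Section VCategoryAxioms.
Context {V : Cat} {M : Monoidal V} {X : Type} (A : VCat M X).
Local Notation "f ⊗ g" := (tenf M f g) (at level 35).
Local Notation "1" := (idm _) : cat_scope.
Local Notation m := (mult A).
Local Notation u := (unt A).

Lemma m_assoc x y z w : m x z w ∘ (m x y z ⊗ 1) = m x y w ∘ (1 ⊗ m y z w) ∘ assoc M _ _ _.
Proof. apply mult_assoc. Qed.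
Lemma m_assoc' x y z w :
  m x y w ∘ (1 ⊗ m y z w) = m x z w ∘ (m x y z ⊗ 1) ∘ assoc_inv M _ _ _.
Proof. rw m_assoc. rw assoc_inv_r. reflexivity. Qed.
Lemma m_unit_l x y : m x x y ∘ (u x ⊗ 1) = lunit M _. Proof. apply unt_l. Qed.
Lemma m_unit_r x y : m x y y ∘ (1 ⊗ u y) = runit M _. Proof. apply unt_r. Qed.

End VCategoryAxioms.

Section Convolution.
Context {V : Cat} {M : Monoidal V} {X : Type} (A : VCat M X).
Local Notation "f ⊗ g" := (tenf M f g) (at level 35).
Local Notation m := (mult A).
Local Notation u := (unt A).

Context (D : V) (dD : Hom D (ten M D D)) (eD : Hom D (unit M))
  (HD : is_comonoid M D dD eD).

Definition conv {p q r} (f : Hom D (hom A p q)) (g : Hom D (hom A q r)) : Hom D (hom A p r) :=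
  m p q r ∘ (f ⊗ g) ∘ dD.

Lemma conv_assoc {p q r s} (f : Hom D (hom A p q)) (g : Hom D (hom A q r))
  (h : Hom D (hom A r s)) : conv (conv f g) h = conv f (conv g h).
Proof.
  destruct HD as [coas _]. unfold conv. norm.
  rewrite (tensor_split_l dD (m p q r ∘ (f ⊗ g)) h), (tensor_split_l' (f ⊗ g) (m p q r) h).
  norm. rw m_assoc. rw assoc_natural. rw coas.
  rewrite (tensor_split_r dD (m q r s ∘ (g ⊗ h)) f), (tensor_split_r' (g ⊗ h) (m q r s) f).
  norm. reflexivity.
Qed.

Lemma conv_unit_r {p q} (f : Hom D (hom A p q)) : conv f (u q ∘ eD) = f.
Proof.
  destruct HD as [_ [_ cuR]]. unfold conv. rewrite (tensor_split_r' eD (u q) f). norm.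
  rw m_unit_r. rewrite <- (tensor_lr f eD). norm. rwb runit_natural. rw cuR. reflexivity.
Qed.

Lemma conv_unit_l {p q} (f : Hom D (hom A p q)) : conv (u p ∘ eD) f = f.
Proof.
  destruct HD as [_ [cuL _]]. unfold conv. rewrite (tensor_split_l' eD (u p) f). norm.
  rw m_unit_l. rewrite <- (tensor_rl eD f). norm. rwb lunit_natural. rw cuL. reflexivity.
Qed.

Lemma conv_inverse_unique {p q} (f : Hom D (hom A p q)) (g k : Hom D (hom A q p)) :
  conv g f = u q ∘ eD -> conv f k = u p ∘ eD -> g = k.
Proof.
  intros Hgf Hfk.
  rewrite <- (conv_unit_r g), <- Hfk, <- conv_assoc, Hgf. apply conv_unit_l.
Qed.

End Convolution.

Section HopfAntipode.
Context {V : Cat} {M : Monoidal V} {B : Braiding V M} {X : Type} (H : Hopf M B X).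
Local Notation "f ⊗ g" := (tenf M f g) (at level 35).
Local Notation "1" := (idm _) : cat_scope.
Local Notation I := (unit M).
Local Notation λ := (lunit M).
Local Notation σ := (braid B).
Local Notation IC := (interchange M B).
Local Notation h := (hom H).
Local Notation m := (mult H).
Local Notation u := (unt H).
Local Notation Δ := (comult H).
Local Notation ε := (counit H).
Local Notation S := (antipode H).

Lemma counit_l x y : λ _ ∘ (ε x y ⊗ 1) ∘ Δ x y = 1.
Proof. destruct (comonoid_ax _ _ _ H x y) as [_ [E _]]. exact E. Qed.
Lemma comult_mult x y z :
  Δ x z ∘ m x y z = (m x y z ⊗ m x y z) ∘ IC _ _ _ _ ∘ (Δ x y ⊗ Δ y z).
Proof.
  destruct (mult_comonoid_morphism _ _ _ H x y z) as [E _].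
  rewrite E. unfold ten_comult. norm. reflexivity.
Qed.
Lemma counit_mult x y z : ε x z ∘ m x y z = λ I ∘ (ε x y ⊗ ε y z).
Proof. destruct (mult_comonoid_morphism _ _ _ H x y z) as [_ E]. exact E. Qed.
Lemma counit_unt x : ε x x ∘ u x = 1.
Proof. destruct (unt_comonoid_morphism _ _ _ H x) as [_ E]. exact E. Qed.
Lemma antipode_l' x y : m x y x ∘ (1 ⊗ S x y) ∘ Δ x y = u x ∘ ε x y.
Proof. apply antipode_l. Qed.
Lemma antipode_r' x y : m y x y ∘ (S x y ⊗ 1) ∘ Δ x y = u y ∘ ε x y.
Proof. apply antipode_r. Qed.

(* The antipode preserves the counit: apply ε_{xx} to the antipode axiom. *)
Lemma counit_antipode x y : ε y x ∘ S x y = ε x y.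
Proof.
  assert (E := f_equal (fun k => ε x x ∘ k) (antipode_l' x y)). simpl in E. normH E.
  rewrite counit_unt in E. normH E. rewrite <- E. rw counit_mult. rwb tensor_comp.
  rewrite <- (tensor_rl (ε x y) (ε y x ∘ S x y)). norm. rwb lunit_natural. rw counit_l.
  reflexivity.
Qed.

Lemma hom_pair_comonoid x y z :
  is_comonoid M (ten M (h x y) (h y z))
    (ten_comult M B (Δ x y) (Δ y z)) (ten_counit M (ε x y) (ε y z)).
Proof. apply tensor_comonoid; apply comonoid_ax. Qed.

Local Notation conv2 x y z := (conv H _ (ten_comult M B (Δ x y) (Δ y z))).

Lemma antipode_mult_conv x y z :
  conv2 x y z (S x z ∘ m x y z) (m x y z) = u z ∘ ten_counit M (ε x y) (ε y z).
Proof.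
  unfold conv, ten_comult, ten_counit.
  rewrite (tensor_split_l' (m x y z) (S x z) (m x y z)). norm.
  rwb comult_mult. rw antipode_r'. rw counit_mult. reflexivity.
Qed.

Lemma mult_antipode_conv x y z :
  conv2 x y z (m x y z) (m z y x ∘ (S y z ⊗ S x y) ∘ σ _ _)
  = u x ∘ ten_counit M (ε x y) (ε y z).
Proof.
  unfold conv, ten_comult, ten_counit. norm.
  rw tensor_split_r. rw tensor_split_r. rewrite <- (tensor_lr (m x y z) (m z y x)). norm.
  rw m_assoc. rewrite <- (tensor_id (h x y) (h y z)).
  rw assoc_natural. rw assoc_natural. rw assoc_natural.
  rewrite interchange_swap12. norm. rw assoc_inv_r. repeat rw tensor_r_comp.
  rewrite (tensor_split_r (σ (h x y) (h y z)) (m z y x ∘ (S y z ⊗ S x y)) (idm (h y z))),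
    (tensor_split_r (S y z ⊗ S x y) (m z y x) (idm (h y z))). norm.
  rw m_assoc'.
  unfold swap12. norm. rwb hexagon_1. rw assoc_inv_r. rw assoc_inv_natural. rw assoc_inv_l.
  rewrite <- (tensor_rl (Δ x y) (Δ y z)), <- (tensor_id (h x y) (h x y)). norm.
  rw assoc_natural. rw tensor_r_comp. rwb braid_natural. rwb tensor_comp. rwb tensor_comp.
  rw antipode_l'. rw tensor_split_l'. rw m_unit_l.
  rewrite <- (tensor_rl (ε y z) (S x y)). norm. rwb lunit_natural.
  rw braid_natural. rw lunit_braid.
  rw tensor_split_r. rw tensor_split_r. rwb assoc_natural. rewrite tensor_id.
  rwb runit_tensor. rw tensor_rl. rewrite <- (tensor_lr (Δ x y) (ε y z)). norm.
  rwb runit_natural. rw antipode_l'. rw (runit_natural (ε x y)). rw tensor_lr.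
  rewrite lunit_unit_runit. reflexivity.
Qed.

Lemma antipode_antimult x y z :
  S x z ∘ m x y z = m z y x ∘ (S y z ⊗ S x y) ∘ σ (h x y) (h y z).
Proof.
  exact (conv_inverse_unique H _ _ _ (hom_pair_comonoid x y z) (m x y z) _ _
           (antipode_mult_conv x y z) (mult_antipode_conv x y z)).
Qed.

End HopfAntipode.

Section IntegralCones.
Context {V : Cat} {M : Monoidal V} {B : Braiding V M} {X : Type} (H : Hopf M B X).
Local Notation "f ⊗ g" := (tenf M f g) (at level 35).
Local Notation "1" := (idm _) : cat_scope.
Local Notation σ' := (braid_inv _ _ B).
Local Notation h := (hom H).
Local Notation m := (mult H).
Local Notation ε := (counit H).
Local Notation S := (antipode H).

Lemma antipode_antimult' x y z :
  m z y x ∘ (S y z ⊗ S x y) = S x z ∘ m x y z ∘ σ' (h x y) (h y z).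
Proof. rw antipode_antimult. rw braid_inv_r. reflexivity. Qed.

(* Post-composition with the antipode turns a right integral cone at x into a
   left integral cone at x; invertibility of S_{y x'} is used to cancel it
   from the cone condition at (x', y). *)
Lemma antipode_right_to_left_cone (x : X) (W : V) (w : forall y, Hom W (h x y)) :
  invertible_antipode H -> right_integral_cone H x W w ->
  left_integral_cone H x W (fun y => S x y ∘ w y).
Proof.
  intros Sinv hw x' y. destruct (Sinv y x') as [T [_ ST]].
  apply (iso_cancel_r (S y x' ⊗ idm W) (T ⊗ idm W));
    [rewrite <- tensor_comp, ST, comp1l, tensor_id; reflexivity|].
  norm. rw tensor_rl. rewrite (tensor_split_r (w y) (S x y) (S y x')). norm.
  rw antipode_antimult'. rwb braid_inv_natural. rw hw.
  rewrite <- (tensor_lr (w x') (ε y x')). norm. rwb runit_natural. rw braid_inv_natural.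
  rw runit_braid_inv. rwb tensor_comp. rw counit_antipode.
  rewrite <- (tensor_rl (ε y x') (S x x' ∘ w x')). norm. rwb lunit_natural. reflexivity.
Qed.

Lemma antipode_inv_left_to_right_cone (x : X) (W : V) (w : forall y, Hom W (h y x))
  (T : forall x y, Hom (h y x) (h x y))
  (TS : forall x y, T x y ∘ S x y = 1) (ST : forall x y, S x y ∘ T x y = 1) :
  left_integral_cone H x W w -> right_integral_cone H x W (fun y => T x y ∘ w y).
Proof.
  intros hw z y. apply (iso_cancel_l (S x y) (T x y)); [apply TS|].
  norm. rw antipode_antimult. rwb braid_natural. rwb tensor_comp. rw ST.
  rewrite <- (tensor_rl (S z y) (w z)). norm.
  rw hw. rwb tensor_comp. rw counit_antipode. rewrite <- (tensor_rl (ε z y) (w y)). norm.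
  rwb lunit_natural. rw braid_natural. rw lunit_braid.
  rewrite <- (tensor_lr (T x y ∘ w y) (ε z y)). norm. rwb runit_natural. rw ST.
  reflexivity.
Qed.

Lemma antipode_inverses :
  invertible_antipode H ->
  exists T : forall x y, Hom (h y x) (h x y),
    (forall x y, T x y ∘ S x y = 1) /\ (forall x y, S x y ∘ T x y = 1).
Proof.
  intros Sinv.
  exists (fun x y => proj1_sig (constructive_indefinite_description _ (Sinv x y))).
  split; intros x y; destruct (constructive_indefinite_description _ (Sinv x y)) as [T [TS ST]];
    assumption.
Qed.

Lemma right_integral_endo_id (x : X) (R : V) (tau : forall y, Hom R (h x y)) (f : Hom R R) :
  is_right_integral_space H x R tau -> (forall y, tau y ∘ f = tau y) -> f = idm R.
Proof.
  intros [cone univ] Hf. destruct (univ R tau cone) as [u0 [_ uniq]].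
  rewrite (uniq f Hf). symmetry. apply uniq. intros y. apply comp1r.
Qed.
Lemma left_integral_endo_id (x : X) (L : V) (tau : forall y, Hom L (h y x)) (f : Hom L L) :
  is_left_integral_space H x L tau -> (forall y, tau y ∘ f = tau y) -> f = idm L.
Proof.
  intros [cone univ] Hf. destruct (univ L tau cone) as [u0 [_ uniq]].
  rewrite (uniq f Hf). symmetry. apply uniq. intros y. apply comp1r.
Qed.

End IntegralCones.

Theorem mainTheorem4 (V : Cat) (M : Monoidal V) (B : Braiding V M)
    (Cl : Closed V M) (X : Type) (H : Hopf M B X)
    (Hinv : invertible_antipode H) (x : X)
    (Rx : V) (tauR : forall y, Hom Rx (hom H x y))
    (HR : is_right_integral_space H x Rx tauR)
    (Lx : V) (tauL : forall y, Hom Lx (hom H y x))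
    (HL : is_left_integral_space H x Lx tauL) :
  isomorphic Rx Lx.
Proof.
  destruct (antipode_inverses H Hinv) as [T [TS ST]].
  destruct (proj2 HL Rx _ (antipode_right_to_left_cone H x Rx tauR Hinv (proj1 HR)))
    as [phi [phiE _]].
  destruct (proj2 HR Lx _ (antipode_inv_left_to_right_cone H x Lx tauL T TS ST (proj1 HL)))
    as [psi [psiE _]].
  exists phi, psi. split.
  - apply (right_integral_endo_id H x Rx tauR _ HR). intros y.
    rewrite compA, psiE, <- compA, phiE, compA, TS, comp1l. reflexivity.
  - apply (left_integral_endo_id H x Lx tauL _ HL). intros y.
    rewrite compA, phiE, <- compA, psiE, compA, ST, comp1l. reflexivity.
Qed.
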